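(* Let $\rho_x=\frac12(I+\vec v_x\cdot\vec\sigma)$, $x=1,2,3$, be qubit states with equal purity $\|\vec v_1\|=\|\vec v_2\|=\|\vec v_3\|=f$, given with equal prior probabilities $1/3$, and suppose the convex hull of $\vec v_1,\vec v_2,\vec v_3$ contains the origin. Then $$P_{\mathrm{guess}}=\frac13+\frac13 f,$$ independently of any other details of the states (e.g. the angles between them).
   Context: $\vec\sigma=(X,Y,Z)$ are the Pauli matrices; the purity of a qubit state is the Euclidean norm of its Bloch vector. $P_{\mathrm{guess}}=\max\sum_{x=1}^3\frac13\mathrm{tr}[M_x\rho_x]$ over POVMs $\{M_x\}_{x=1}^3$ (positive semidefinite operators summing to $I$). *)

From HB Require Import structures.
From mathcomp Require Import all_boot all_order all_algebra.
From mathcomp Require Import complex.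
Set Implicit Arguments. Unset Strict Implicit. Unset Printing Implicit Defensive.
Import Order.TTheory GRing.Theory Num.Theory.
Local Open Scope ring_scope.
Local Open Scope complex_scope.

Section Qubit.
Variable R : rcfType.
Local Notation C := (R[i]).

Definition ctrans m n (A : 'M[C]_(m, n)) : 'M[C]_(n, m) := (map_mx Num.conj A)^T.

(* positive semidefinite: <v, A v> is a nonnegative real for every vector v
   (in the partial order of the numClosedField C, 0 <= z means z is real and >= 0) *)
Definition psd (A : 'M[C]_2) : Prop :=
  forall v : 'cV[C]_2, 0 <= (ctrans v *m A *m v) 0 0.

Definition pauliX : 'M[C]_2 := \matrix_(i < 2, j < 2) (if i == j then 0 else 1).
Definition pauliY : 'M[C]_2 :=
  \matrix_(i < 2, j < 2)
    (if i == j then 0 else if (i : nat) == 0%N then - 'i else 'i).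
Definition pauliZ : 'M[C]_2 :=
  \matrix_(i < 2, j < 2) (if i == j then (if (i : nat) == 0%N then 1 else -1) else 0).

Definition bloch_state (v : 'rV[R]_3) : 'M[C]_2 :=
  (1 / 2 : C) *: (1%:M + ((v 0 0)%:C *: pauliX + (v 0 1)%:C *: pauliY
                          + (v 0 2)%:C *: pauliZ)).

Definition bnorm (v : 'rV[R]_3) : R := Num.sqrt (\sum_(k < 3) v 0 k ^+ 2).

Definition is_state (rho : 'M[C]_2) : Prop := psd rho /\ \tr rho = 1.

Definition is_povm (M : 'I_3 -> 'M[C]_2) : Prop :=
  (forall x, psd (M x)) /\ \sum_(x < 3) M x = 1%:M.

Definition succ_prob (rho M : 'I_3 -> 'M[C]_2) : C :=
  \sum_(x < 3) (1 / 3) * \tr (M x *m rho x).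

Definition origin_in_hull (v : 'I_3 -> 'rV[R]_3) : Prop :=
  exists lam : 'I_3 -> R, (forall x, 0 <= lam x) /\ \sum_(x < 3) lam x = 1 /\
    \sum_(x < 3) lam x *: v x = 0.

Definition is_Pguess (rho : 'I_3 -> 'M[C]_2) (p : C) : Prop :=
  (forall M, is_povm M -> succ_prob rho M <= p) /\
  (exists M, is_povm M /\ succ_prob rho M = p).

End Qubit.

(* For a Bloch vector v of length f, (v.sigma)^2 = f^2 I, so N := f I - v.sigma
   satisfies N N^* = N^2 = 2 f N: it is a nonnegative multiple of a Gram matrix,
   hence positive semidefinite.  Therefore rho_v = (1 + f)/2 I - N/2 <= (1 + f)/2 I,
   and for every POVM  sum_x tr(M_x rho_x)/3 <= (1 + f)/6 sum_x tr M_x = (1 + f)/3.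
   Conversely, if sum_x lam_x v_x = 0 for a probability vector lam, the operators
   M_x = 2 lam_x rho_(v_x/f) are psd, sum to (by affinity of the Bloch map)
   2 rho_0 = I, and achieve tr(M_x rho_x) = lam_x (1 + f). *)

From mathcomp Require Import all_boot all_order all_algebra.
From mathcomp Require Import complex ring lra.
Set Implicit Arguments. Unset Strict Implicit. Unset Printing Implicit Defensive.
Import Order.TTheory GRing.Theory Num.Theory.
Local Open Scope ring_scope.
Local Open Scope complex_scope.

Section Qubit.
Variable R : rcfType.
Local Notation C := R[i].

Ltac field_complex :=
  apply/eqP; rewrite eq_complex /=; apply/andP; split; apply/eqP; field.

Lemma sum_ord3 (V : nmodType) (F : 'I_3 -> V) : \sum_(k < 3) F k = F 0 + F 1 + F 2.
Proof.
by rewrite !big_ord_recl big_ord0 addr0 addrA; congr (F _ + F _ + F _); apply: val_inj.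
Qed.

Lemma realC_ge0 (x : R) : 0 <= x -> 0 <= x%:C.
Proof. by move=> x0; rewrite lecE /= eqxx. Qed.

Lemma div1n_realC (n : nat) : (1 / n%:R : C) = (1 / n%:R)%:C.
Proof. by rewrite fmorph_div rmorph1 rmorph_nat. Qed.

Lemma ctrans_mul m n p (A : 'M[C]_(m, n)) (B : 'M[C]_(n, p)) :
  ctrans (A *m B) = ctrans B *m ctrans A.
Proof. by rewrite /ctrans map_mxM trmx_mul. Qed.

Lemma ctransK m n (A : 'M[C]_(m, n)) : ctrans (ctrans A) = A.
Proof.
by rewrite /ctrans map_trmx trmxK -map_mx_comp map_mx_id // => x; rewrite /= conjCK.
Qed.

Lemma ctrans_mul_self_ge0 n (w : 'cV[C]_n) : 0 <= (ctrans w *m w) 0 0.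
Proof.
rewrite mxE; apply: sumr_ge0 => k _; rewrite !mxE mulrC; exact: mul_conjC_ge0.
Qed.

Lemma psd1 : psd (1%:M : 'M[C]_2).
Proof. by move=> w; rewrite mulmx1; apply: ctrans_mul_self_ge0. Qed.

Lemma psd_gram n (A : 'M[C]_(2, n)) : psd (A *m ctrans A).
Proof.
move=> w; have -> : ctrans w *m (A *m ctrans A) *m w =
                    ctrans (ctrans A *m w) *m (ctrans A *m w).
  by rewrite ctrans_mul ctransK !mulmxA.
exact: ctrans_mul_self_ge0.
Qed.

Lemma psdD (A B : 'M[C]_2) : psd A -> psd B -> psd (A + B).
Proof. by move=> hA hB w; rewrite mulmxDr mulmxDl mxE addr_ge0. Qed.

Lemma psdZ (c : C) (A : 'M[C]_2) : 0 <= c -> psd A -> psd (c *: A).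
Proof. by move=> c0 hA w; rewrite -scalemxAr -scalemxAl mxE mulr_ge0. Qed.

Lemma mxtrace_mul_gram_ge0 n (M : 'M[C]_2) (A : 'M[C]_(2, n)) :
  psd M -> 0 <= \tr (M *m (A *m ctrans A)).
Proof.
move=> hM; rewrite mulmxA mxtrace_mulC mulmxA; apply: sumr_ge0 => j _.
have -> : (ctrans A *m M *m A) j j = (ctrans (col j A) *m M *m col j A) 0 0.
  rewrite !mxE; apply: eq_bigr => k _; rewrite !mxE; congr (_ * _).
  by apply: eq_bigr => l _; rewrite !mxE.
exact: hM.
Qed.

Definition mx2 (a b c d : C) : 'M[C]_2 :=
  \matrix_(i, j) if (i : nat) == 0%N then (if (j : nat) == 0%N then a else b)
                 else (if (j : nat) == 0%N then c else d).

Lemma mx2_add a b c d a' b' c' d' :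
  mx2 a b c d + mx2 a' b' c' d' = mx2 (a + a') (b + b') (c + c') (d + d').
Proof. by apply/matrixP => - [[|[|//]] ?] [[|[|//]] ?]; rewrite !mxE. Qed.

Lemma mx2_opp a b c d : - mx2 a b c d = mx2 (- a) (- b) (- c) (- d).
Proof. by apply/matrixP => - [[|[|//]] ?] [[|[|//]] ?]; rewrite !mxE. Qed.

Lemma mx2_scale k a b c d : k *: mx2 a b c d = mx2 (k * a) (k * b) (k * c) (k * d).
Proof. by apply/matrixP => - [[|[|//]] ?] [[|[|//]] ?]; rewrite !mxE. Qed.

Lemma mx2_scalar a : a%:M = mx2 a 0 0 a.
Proof. by apply/matrixP => - [[|[|//]] ?] [[|[|//]] ?]; rewrite !mxE. Qed.

Lemma mx2_mul a b c d a' b' c' d' :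
  mx2 a b c d *m mx2 a' b' c' d' =
  mx2 (a * a' + b * c') (a * b' + b * d') (c * a' + d * c') (c * b' + d * d').
Proof.
apply/matrixP => - [[|[|//]] ?] [[|[|//]] ?];
  by rewrite !mxE !big_ord_recl big_ord0 !mxE /= addr0.
Qed.

Lemma mx2_ctrans a b c d : ctrans (mx2 a b c d) = mx2 a^* c^* b^* d^*.
Proof. by apply/matrixP => - [[|[|//]] ?] [[|[|//]] ?]; rewrite !mxE. Qed.

Lemma mx2_trace a b c d : \tr (mx2 a b c d) = a + d.
Proof. by rewrite /mxtrace !big_ord_recl big_ord0 !mxE /= addr0. Qed.

Definition dot3 (u w : 'rV[R]_3) : R := \sum_(k < 3) u 0 k * w 0 k.

Lemma bnorm_sqr (v : 'rV[R]_3) : bnorm v ^+ 2 = dot3 v v.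
Proof.
rewrite /bnorm sqr_sqrtr; last by apply: sumr_ge0 => k _; exact: sqr_ge0.
by apply: eq_bigr => k _; rewrite expr2.
Qed.

Lemma bnorm_ge0 (v : 'rV[R]_3) : 0 <= bnorm v.
Proof. exact: sqrtr_ge0. Qed.

Lemma bnorm_eq0 (v : 'rV[R]_3) : bnorm v = 0 -> v = 0.
Proof.
move=> v0; have vv0 : \sum_(k < 3) v 0 k * v 0 k = 0.
  by rewrite -[LHS]bnorm_sqr v0 expr0n.
apply/rowP => k; rewrite mxE; apply/eqP; rewrite -sqrf_eq0 expr2; apply/eqP.
by apply: (psumr_eq0P _ vv0) => // i _; rewrite -expr2 sqr_ge0.
Qed.

Lemma bnormN (v : 'rV[R]_3) : bnorm (- v) = bnorm v.
Proof. by rewrite /bnorm; congr Num.sqrt; apply: eq_bigr => k _; rewrite mxE sqrrN. Qed.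

Lemma bnormZ (a : R) (v : 'rV[R]_3) : bnorm (a *: v) = `|a| * bnorm v.
Proof.
rewrite /bnorm -sqrtr_sqr -sqrtrM ?sqr_ge0 // mulr_sumr; congr Num.sqrt.
by apply: eq_bigr => k _; rewrite mxE exprMn.
Qed.

Lemma dot3Zl (a : R) (u w : 'rV[R]_3) : dot3 (a *: u) w = a * dot3 u w.
Proof. by rewrite /dot3 mulr_sumr; apply: eq_bigr => k _; rewrite mxE mulrA. Qed.

Lemma dot3_normalize (v : 'rV[R]_3) : dot3 ((bnorm v)^-1 *: v) v = bnorm v.
Proof.
rewrite dot3Zl -bnorm_sqr; have [->|v0] := eqVneq (bnorm v) 0; first by rewrite invr0 mul0r.
by rewrite expr2 mulKf.
Qed.

Lemma bnorm_normalize (v : 'rV[R]_3) : bnorm ((bnorm v)^-1 *: v) <= 1.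
Proof.
rewrite bnormZ ger0_norm ?invr_ge0 ?bnorm_ge0 //.
by have [->|v0] := eqVneq (bnorm v) 0; rewrite ?invr0 ?mul0r ?ler01 ?mulVf.
Qed.

Definition pauli_op (v : 'rV[R]_3) : 'M[C]_2 :=
  (v 0 0)%:C *: pauliX R + (v 0 1)%:C *: pauliY R + (v 0 2)%:C *: pauliZ R.

Lemma pauli_opE v :
  pauli_op v = mx2 (v 0 2)%:C (v 0 0 +i* - v 0 1) (v 0 0 +i* v 0 1) (- v 0 2)%:C.
Proof.
rewrite /pauli_op /pauliX /pauliY /pauliZ.
move: (v 0 0) (v 0 1) (v 0 2) => x y z.
by apply/matrixP => - [[|[|//]] ?] [[|[|//]] ?]; rewrite !mxE /=; field_complex.
Qed.

Lemma pauli_opD (u w : 'rV[R]_3) : pauli_op (u + w) = pauli_op u + pauli_op w.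
Proof. by rewrite !pauli_opE !mxE mx2_add; congr mx2; field_complex. Qed.

Lemma pauli_opZ (a : R) (u : 'rV[R]_3) : pauli_op (a *: u) = a%:C *: pauli_op u.
Proof. by rewrite !pauli_opE !mxE mx2_scale; congr mx2; field_complex. Qed.

Lemma pauli_op0 : pauli_op 0 = 0.
Proof. by rewrite -(scale0r (0 : 'rV[R]_3)) pauli_opZ scale0r. Qed.

Lemma bloch_state_pauli v : bloch_state v = (1 / 2)%:C *: (1%:M + pauli_op v).
Proof. by rewrite -div1n_realC. Qed.

Lemma bloch_stateE v : bloch_state v =
  mx2 ((1 + v 0 2) / 2)%:C (v 0 0 / 2 +i* - (v 0 1 / 2))
      (v 0 0 / 2 +i* (v 0 1 / 2)) ((1 - v 0 2) / 2)%:C.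
Proof.
rewrite bloch_state_pauli pauli_opE mx2_scalar mx2_add mx2_scale.
by congr mx2; field_complex.
Qed.

Lemma bloch_state0 : bloch_state (0 : 'rV[R]_3) = (1 / 2)%:C%:M.
Proof. by rewrite bloch_state_pauli pauli_op0 addr0 scalemx1. Qed.

Lemma mxtrace_bloch_mul u w :
  \tr (bloch_state u *m bloch_state w) = ((1 + dot3 u w) / 2)%:C.
Proof. by rewrite !bloch_stateE mx2_mul mx2_trace /dot3 sum_ord3; field_complex. Qed.

Lemma bloch_state_convex (I : finType) (lam : I -> R) (u : I -> 'rV[R]_3) :
  \sum_i lam i = 1 ->
  \sum_i (lam i)%:C *: bloch_state (u i) = bloch_state (\sum_i lam i *: u i).
Proof.
move=> lam1; rewrite bloch_state_pauli.
under eq_bigr do rewrite bloch_state_pauli scalerA mulrC -scalerA scalerDr.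
rewrite -scaler_sumr big_split /= -scaler_suml -rmorph_sum lam1 scale1r.
rewrite (big_morph _ pauli_opD pauli_op0).
by congr (_ *: (_ + _)); apply: eq_bigr => i _; rewrite pauli_opZ.
Qed.

Definition pauli_gap (v : 'rV[R]_3) : 'M[C]_2 := (bnorm v)%:C%:M - pauli_op v.

Lemma pauli_gapE v : pauli_gap v =
  mx2 (bnorm v - v 0 2)%:C (- v 0 0 +i* v 0 1) (- v 0 0 +i* - v 0 1) (bnorm v + v 0 2)%:C.
Proof.
by rewrite /pauli_gap pauli_opE mx2_scalar mx2_opp mx2_add; congr mx2; field_complex.
Qed.

Lemma pauli_gap_ctrans v : ctrans (pauli_gap v) = pauli_gap v.
Proof. by rewrite pauli_gapE mx2_ctrans; congr mx2; field_complex. Qed.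

Lemma pauli_gap_sqr v : pauli_gap v *m pauli_gap v = (2 * bnorm v)%:C *: pauli_gap v.
Proof.
have := bnorm_sqr v; rewrite /dot3 sum_ord3 pauli_gapE mx2_mul mx2_scale.
move: (bnorm v) (v 0 0) (v 0 1) (v 0 2) => f x y z hf.
by congr mx2; apply/eqP; rewrite eq_complex /=; apply/andP; split; apply/eqP; lra.
Qed.

Lemma pauli_gap0 (v : 'rV[R]_3) : bnorm v = 0 -> pauli_gap v = 0.
Proof.
move=> v0; rewrite pauli_gapE v0 (bnorm_eq0 v0) !mxE.
have -> : mx2 (0 - 0)%:C (- 0 +i* 0) (- 0 +i* - 0) (0 + 0)%:C = mx2 0 0 0 0.
  by congr mx2; field_complex.
by rewrite -mx2_scalar raddf0.
Qed.

Lemma pauli_gap_gram (v : 'rV[R]_3) :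
  pauli_gap v = (2 * bnorm v)^-1%:C *: (pauli_gap v *m ctrans (pauli_gap v)).
Proof.
have [v0|v_neq0] := eqVneq (bnorm v) 0; first by rewrite pauli_gap0 // mul0mx scaler0.
rewrite pauli_gap_ctrans pauli_gap_sqr scalerA -rmorphM mulVf ?rmorph1 ?scale1r //.
by rewrite mulf_neq0 ?pnatr_eq0.
Qed.

Lemma psd_pauli_gap (v : 'rV[R]_3) : psd (pauli_gap v).
Proof.
rewrite pauli_gap_gram; apply: psdZ (psd_gram _).
by rewrite realC_ge0 // invr_ge0 mulr_ge0 ?bnorm_ge0.
Qed.

Lemma mxtrace_mul_pauli_gap_ge0 (M : 'M[C]_2) (v : 'rV[R]_3) :
  psd M -> 0 <= \tr (M *m pauli_gap v).
Proof.
move=> hM; rewrite pauli_gap_gram -scalemxAr mxtraceZ mulr_ge0 ?mxtrace_mul_gram_ge0 //.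
by rewrite realC_ge0 // invr_ge0 mulr_ge0 ?bnorm_ge0.
Qed.

Lemma bloch_state_gap (v : 'rV[R]_3) :
  bloch_state v = ((1 + bnorm v) / 2)%:C%:M - (1 / 2)%:C *: pauli_gap v.
Proof.
rewrite bloch_stateE pauli_gapE mx2_scalar mx2_scale mx2_opp mx2_add.
by congr mx2; field_complex.
Qed.

Lemma bloch_state_gap_opp (v : 'rV[R]_3) :
  bloch_state v = (1 / 2)%:C *: ((1 - bnorm v)%:C%:M + pauli_gap (- v)).
Proof.
rewrite bloch_stateE pauli_gapE bnormN !mxE mx2_scalar mx2_add mx2_scale.
by congr mx2; field_complex.
Qed.

Lemma mxtrace_mul_bloch_le (M : 'M[C]_2) (v : 'rV[R]_3) :
  psd M -> \tr (M *m bloch_state v) <= ((1 + bnorm v) / 2)%:C * \tr M.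
Proof.
move=> hM; rewrite bloch_state_gap mulmxBr mul_mx_scalar -scalemxAr.
rewrite linearB /= !mxtraceZ gerBl mulr_ge0 ?mxtrace_mul_pauli_gap_ge0 //.
by rewrite realC_ge0 // divr_ge0 ?ler01 ?ler0n.
Qed.

Lemma bloch_state_psd (v : 'rV[R]_3) : bnorm v <= 1 -> psd (bloch_state v).
Proof.
move=> v_le1; rewrite bloch_state_gap_opp.
apply: psdZ; first by rewrite realC_ge0 // divr_ge0 ?ler01 ?ler0n.
apply: psdD (psd_pauli_gap _); rewrite -scalemx1.
by apply: psdZ psd1; rewrite realC_ge0 // subr_ge0.
Qed.

Lemma succ_prob_le (v : 'I_3 -> 'rV[R]_3) (f : R) (M : 'I_3 -> 'M[C]_2) :
  (forall x, bnorm (v x) = f) -> is_povm M ->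
  succ_prob (fun x => bloch_state (v x)) M <= (1 / 3 + 1 / 3 * f)%:C.
Proof.
move=> hv [M_psd M_sum].
have tr_sum : \sum_x \tr (M x) = 2%:R%:C.
  by rewrite -raddf_sum M_sum /= mxtrace1 rmorph_nat.
have -> : (1 / 3 + 1 / 3 * f)%:C = \sum_x 1 / 3 * (((1 + f) / 2)%:C * \tr (M x)).
  rewrite -mulr_sumr -mulr_sumr tr_sum div1n_realC.
  by rewrite -!rmorphM; congr _%:C; field.
apply: ler_sum => x _; apply: ler_wpM2l; first by rewrite divr_ge0 ?ler01 ?ler0n.
by rewrite -(hv x); apply: mxtrace_mul_bloch_le.
Qed.

(* When f = 0 the convention 0^-1 = 0 makes this the trivial measurement lam x * I. *)
Definition opt_povm (lam : 'I_3 -> R) (f : R) (v : 'I_3 -> 'rV[R]_3) (x : 'I_3) :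
  'M[C]_2 := (2 * lam x)%:C *: bloch_state (f^-1 *: v x).

Lemma opt_povm_is_povm (lam : 'I_3 -> R) (f : R) (v : 'I_3 -> 'rV[R]_3) :
  (forall x, bnorm (v x) = f) -> (forall x, 0 <= lam x) -> \sum_x lam x = 1 ->
  \sum_x lam x *: v x = 0 -> is_povm (opt_povm lam f v).
Proof.
move=> hv lam_ge0 lam1 lam_v; split=> [x|].
  apply: psdZ; first by rewrite realC_ge0 // mulr_ge0 ?ler0n.
  by apply: bloch_state_psd; rewrite -(hv x) bnorm_normalize.
rewrite /opt_povm; under eq_bigr do rewrite rmorphM -scalerA.
rewrite -scaler_sumr bloch_state_convex //.
have -> : \sum_x lam x *: (f^-1 *: v x) = f^-1 *: \sum_x lam x *: v x.
  by rewrite scaler_sumr; apply: eq_bigr => x _; rewrite !scalerA mulrC.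
rewrite lam_v scaler0 bloch_state0 scale_scalar_mx -rmorphM.
by rewrite div1r divff ?pnatr_eq0 ?rmorph1.
Qed.

Lemma succ_prob_opt_povm (lam : 'I_3 -> R) (f : R) (v : 'I_3 -> 'rV[R]_3) :
  (forall x, bnorm (v x) = f) -> \sum_x lam x = 1 ->
  succ_prob (fun x => bloch_state (v x)) (opt_povm lam f v) = (1 / 3 + 1 / 3 * f)%:C.
Proof.
move=> hv lam1; rewrite /succ_prob.
under eq_bigr => x _ do
  rewrite /opt_povm -scalemxAl mxtraceZ mxtrace_bloch_mul -{1}(hv x) dot3_normalize hv.
rewrite div1n_realC; under eq_bigr do rewrite -!rmorphM.
rewrite -rmorph_sum; congr _%:C.
rewrite (eq_bigr (fun x => lam x * ((1 + f) / 3))) => [|x _]; last by field.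
by rewrite -big_distrl lam1 /=; field.
Qed.
End Qubit.

Theorem mainTheorem6 (R : rcfType) (v : 'I_3 -> 'rV[R]_3) (f : R) :
  (forall x, is_state (bloch_state (v x))) ->
  (forall x, bnorm (v x) = f) ->
  origin_in_hull v ->
  is_Pguess (fun x => bloch_state (v x)) ((1 / 3 + 1 / 3 * f)%:C).
Proof.
move=> _ hv [lam [lam_ge0 [lam1 lam_v]]]; split=> [M|].
  exact: succ_prob_le.
exists (opt_povm lam f v).
by split; [apply: opt_povm_is_povm | apply: succ_prob_opt_povm].
Qed.
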